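(* Let $a\geq 0$ and $b\in\mathbb{Z}/11\mathbb{Z}$. Then $\operatorname{Hom}(\mathcal{O},\mathcal{O}(a,b))\neq 0$ on $X_w$ unless either $a=0$ and $b\neq 0$, or $(a,b)\in\mathbb{X}:=\{(1,0),(1,2),(1,6),(1,7),(1,8),(1,10),(2,0)\}$.
   Context: Let $w=x_1^2x_2+x_2^2x_3+x_3^2x_4+x_4^2x_5+x_5^2x_1$, $\Gamma_w=\{(t_1,\ldots,t_6)\in\mathbb{G}_m^{6} : w(t_1x_1,\ldots,t_5x_5)=t_6\,w(x)\}$ acting on $\mathbb{A}^5$ via the first $5$ coordinates, and $X_w=[(\operatorname{Spec}(\mathbb{C}[x_1,\ldots,x_5]/(w))\setminus 0)/\Gamma_w]$. One has $\Gamma_w\cong\mathbb{G}_m\times\mathbb{Z}/11\mathbb{Z}$, where $\mathbb{G}_m$ acts by $\lambda\cdot x=(\lambda x_1,\ldots,\lambda x_5)$ and $\mathbb{Z}/11\mathbb{Z}$ is generated by $\rho=(\xi,\xi^9,\xi^4,\xi^3,\xi^5)$ with $\xi$ a primitive $11$th root of unity; so $X_w=[Z_w/\langle\rho\rangle]$ with $Z_w\subset\mathbb{P}^4$ the cubic threefold $w=0$, and $\operatorname{Pic}(X_w)\cong\mathbb{Z}\times\mathbb{Z}/11\mathbb{Z}$. For $(a,b)\in\mathbb{Z}\times\mathbb{Z}/11\mathbb{Z}$, $\mathcal{O}(a,b)$ denotes the corresponding line bundle, normalized so that, grading $\mathbb{C}[x_1,\ldots,x_5]$ by $\mathbb{Z}\times\mathbb{Z}/11\mathbb{Z}$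 with $\deg x_1=(1,1)$, $\deg x_2=(1,9)$, $\deg x_3=(1,4)$, $\deg x_4=(1,3)$, $\deg x_5=(1,5)$, the space $\operatorname{Hom}(\mathcal{O},\mathcal{O}(a,b))$ is the bidegree-$(a,b)$ part of $\mathbb{C}[x_1,\ldots,x_5]/(w)$; and $\mathcal{O}=\mathcal{O}(0,0)$. *)

From HB Require Import structures.
From mathcomp Require Import all_boot all_order all_algebra all_field.
From mathcomp Require Import mpoly.
Set Implicit Arguments. Unset Strict Implicit. Unset Printing Implicit Defensive.
Import GRing.Theory.
Local Open Scope ring_scope.

(* Coordinates x_1..x_5 are 'X_0..'X_4. Base field: algC (mathcomp's model of C). *)

Definition wt (i : 'I_5) : nat := nth 0%N [:: 1; 9; 4; 3; 5]%N i.

Definition mono_bideg (a : nat) (b : 'I_11) (m : 'X_{1..5}) : bool :=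
  (mdeg m == a) && (((\sum_(i < 5) wt i * m i) %% 11)%N == val b).

(* f is bihomogeneous of bidegree (a,b) (0 counts as such) *)
Definition homog_bideg (a : nat) (b : 'I_11) (f : {mpoly algC[5]}) : bool :=
  all (mono_bideg a b) (msupp f).

Definition x (i : 'I_5) : {mpoly algC[5]} := 'X_i.

Definition w_poly : {mpoly algC[5]} :=
  x (inord 0) ^+ 2 * x (inord 1) + x (inord 1) ^+ 2 * x (inord 2)
  + x (inord 2) ^+ 2 * x (inord 3) + x (inord 3) ^+ 2 * x (inord 4)
  + x (inord 4) ^+ 2 * x (inord 0).

(* Hom(O, O(a,b)) = bidegree-(a,b) part of C[x1..x5]/(w); since w is
   bihomogeneous, this part is the image of the bidegree-(a,b) polynomials,
   so it is nonzero iff some such polynomial is not in the ideal (w). *)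
Definition Hom_O_nonzero (a : nat) (b : 'I_11) : Prop :=
  exists f : {mpoly algC[5]},
    homog_bideg a b f /\ ~ (exists g : {mpoly algC[5]}, f = w_poly * g).

Definition in_X (a : nat) (b : 'I_11) : bool :=
  ((a == 1)%N && (val b \in [:: 0; 2; 6; 7; 8; 10]%N)) || ((a == 2)%N && (val b == 0)%N).

(* Bidegrees of monomials form the monoid generated by the (1, wt i), and
   the residues 1, 9, 4, 3, 5 of the weights already give every nonzero
   residue in degree 2 and every residue in degree 3; multiplying by x1,
   of weight 1, carries degree 3 to all higher degrees.  No monomial is a
   multiple of w, because w vanishes at (-4, -4, 2, 4, 2), a point with no
   zero coordinate, where no monomial vanishes. *)

From mathcomp Require Import all_boot all_order all_algebra all_field.
From mathcomp Require Import mpoly.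
Set Implicit Arguments. Unset Strict Implicit. Unset Printing Implicit Defensive.
Import GRing.Theory.
Local Open Scope ring_scope.

Lemma mpolyX_neq_mul_root (R : idomainType) (n : nat) (p : {mpoly R[n]})
    (v : 'I_n -> R) (m : 'X_{1..n}) (g : {mpoly R[n]}) :
  (forall i, v i != 0) -> p.@[v] = 0 -> 'X_[m] != p * g.
Proof.
move=> v_neq0 pv0; apply/eqP => /(congr1 (meval v)).
rewrite mevalM pv0 mul0r mevalX => /eqP; apply/negP/prodf_neq0 => i _.
by rewrite expf_neq0.
Qed.

Definition w_root (i : 'I_5) : algC := (nth 0 [:: -4; -4; 2; 4; 2] i)%:~R.

Lemma w_root_neq0 i : w_root i != 0.
Proof. by case: i => [[|[|[|[|[|//]]]]] ?]; rewrite /w_root intr_eq0. Qed.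

Lemma w_poly_root : w_poly.@[w_root] = 0.
Proof.
rewrite /w_poly /x !expr2 !mevalD !mevalM !mevalXU /w_root !inordK //=.
by rewrite -!rmorphM -!rmorphD.
Qed.

Local Close Scope ring_scope.

Definition bweight (m : 'X_{1..5}) : nat := \sum_(i < 5) wt i * m i.

Lemma mono_bidegE a b m :
  mono_bideg a b m = (mdeg m == a) && (bweight m %% 11 == val b).
Proof. by []. Qed.

Lemma homog_bidegX a b m : homog_bideg a b 'X_[m] = mono_bideg a b m.
Proof. by rewrite /homog_bideg msuppX /= andbT. Qed.

Lemma bweightD m1 m2 : bweight (m1 + m2) = bweight m1 + bweight m2.
Proof. by rewrite /bweight -big_split; apply: eq_bigr => i _; rewrite mnmDE mulnDr. Qed.

Lemma bweightU i : bweight U_(i) = wt i.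
Proof.
rewrite /bweight (bigD1 i) //= big1 => [|j /negbTE ji].
  by rewrite mnm1E eqxx muln1 addn0.
by rewrite mnm1E eq_sym ji muln0.
Qed.

(* Listed by value rather than as [seq wt i | i <- enum 'I_5], so that the
   residue computations below reduce by conversion. *)
Definition weights : seq nat := [:: 1; 9; 4; 3; 5].

Lemma weightsP k : k \in weights -> exists i : 'I_5, wt i = k.
Proof.
move=> k_in; have lt_k5 : index k weights < 5 by rewrite index_mem.
by exists (Ordinal lt_k5); rewrite /wt nth_index.
Qed.

Definition weight_residues (a : nat) : seq nat :=
  iter a (fun rs => [seq (r + k) %% 11 | r <- rs, k <- weights]) [:: 0].

Lemma weight_residuesP a r : r \in weight_residues a ->
  exists m : 'X_{1..5}, mdeg m = a /\ bweight m %% 11 = r.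
Proof.
elim: a r => [r /[!inE] /eqP-> | a IHa r].
  by exists 0%MM; rewrite mdeg0 /bweight big1 // => i _; rewrite mnm0E muln0.
case/allpairsP => -[r' k] /= [/IHa[m [dm wm]] /weightsP[i <-] ->].
exists (m + U_(i))%MM; rewrite mdegD mdeg1 dm addn1 bweightD bweightU.
by rewrite -wm modnDml.
Qed.

Lemma weight_residues_small (a : nat) (b : 'I_11) : a <= 2 ->
  ~ (a = 0 /\ val b <> 0) -> ~~ in_X a b -> val b \in weight_residues a.
Proof.
case: b => [[|[|[|[|[|[|[|[|[|[|[|//]]]]]]]]]]] ?].
all: case: a => [|[|[|//]]] //= _ nz _; first [exact: isT | by exfalso; apply: nz].
Qed.

Lemma weight_residues_succ a :
  (forall r, r < 11 -> r \in weight_residues a) ->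
  forall r, r < 11 -> r \in weight_residues a.+1.
Proof.
move=> full r lt_r11; apply/allpairsP; exists ((r + 10) %% 11, 1) => /=.
split; [exact/full/ltn_pmod | by [] |].
by rewrite modnDml -addnA modnDr modn_small.
Qed.

Lemma weight_residues_ge3 a :
  3 <= a -> forall r, r < 11 -> r \in weight_residues a.
Proof.
have full3 : all (mem (weight_residues 3)) (iota 0 11) := isT.
elim: a => // a IHa; rewrite leq_eqVlt ltnS => /predU1P[<- r lt_r11 | /IHa].
  by apply: (allP full3); rewrite mem_iota.
exact: weight_residues_succ.
Qed.

Theorem lemma4p1 (a : nat) (b : 'I_11) :
  ~ ((a = 0%N) /\ (val b <> 0%N)) -> ~~ in_X a b -> Hom_O_nonzero a b.
Proof.
move=> not_a0 notX.
have [m [deg_m wt_m]] : exists m, mdeg m = a /\ bweight m %% 11 = val b.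
  apply: weight_residuesP; have [le_a2 | lt2a] := leqP a 2.
    exact: weight_residues_small.
  exact: weight_residues_ge3 lt2a _ (ltn_ord b).
exists 'X_[m]; split; first by rewrite homog_bidegX mono_bidegE deg_m wt_m !eqxx.
by case=> g /eqP; apply/negP; exact: mpolyX_neq_mul_root m g w_root_neq0 w_poly_root.
Qed.
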